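(* Let $r>0$, let $U=\{(x_1,\dots,x_n)\in\mathbb{R}^n:|x_1|+\cdots+|x_n|\le r\}$, and let $\Lambda\subset\mathbb{R}^n$ be the lattice generated by $d_1\mathbf e_1,\dots,d_n\mathbf e_n$ with all $d_i>0$ ($\mathbf e_i$ the standard unit vectors). For $S\subseteq\{1,\dots,n\}$ let $d_S=\sum_{i\in S}d_i$. Then $$\#(\Lambda\cap U)\ge\frac1{n!\,d_1\cdots d_n}\sum_{S\subseteq\{1,\dots,n\},\ d_S\le r}(r-d_S)^n.$$ *)

From mathcomp Require Import all_boot all_order all_algebra.
Set Implicit Arguments. Unset Strict Implicit. Unset Printing Implicit Defensive.
Import Order.TTheory GRing.Theory Num.Theory.
Local Open Scope ring_scope.

(* The lattice Lambda generated by d_1 e_1, ..., d_n e_n consists of the points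
   x = (k_1 d_1, ..., k_n d_n) with k : 'I_n -> int, distinct k giving distinct
   points (d_i > 0). *)

Definition lattice_pt (R : realFieldType) (n : nat) (d : 'I_n -> R)
  (k : 'I_n -> int) : 'I_n -> R := fun i => (k i)%:~R * d i.

Definition in_U (R : realFieldType) (n : nat) (r : R) (x : 'I_n -> R) : bool :=
  \sum_(i < n) `|x i| <= r.

(* A bound N with |k_i| <= N for every lattice point in U (|k_i| d_i <= r). *)
Definition box_bound (R : archiRealFieldType) (n : nat) (r : R) (d : 'I_n -> R) : nat :=
  (\sum_(i < n) Num.trunc (r / d i))%N.

(* Integer coordinate vector encoded by an element of the box [-N, N]^n. *)
Definition box_vec (n N : nat) (c : {ffun 'I_n -> 'I_(N + N).+1}) : 'I_n -> int :=
  fun i => (nat_of_ord (c i))%:Z - N%:Z.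

Definition lattice_count (R : archiRealFieldType) (n : nat) (r : R) (d : 'I_n -> R) : nat :=
  #|[set c : {ffun 'I_n -> 'I_(box_bound r d + box_bound r d).+1} |
      in_U r (lattice_pt d (box_vec c))]|.

Definition dS (R : realFieldType) (n : nat) (d : 'I_n -> R) (S : {set 'I_n}) : R :=
  \sum_(i in S) d i.

(* A point m of the simplex {m in N^n | sum_i m_i d_i <= r - d_S} yields the
   lattice point whose i-th coordinate is -(m_i + 1) d_i for i in S and m_i d_i
   otherwise; its l^1 norm is sum_i m_i d_i + d_S <= r, and (S, m) is recovered
   from the signs of the coordinates.  So #(Lambda cap U) is at least the sum over
   S of the numbers of points of these simplices, and a simplex of size s has at
   least s^n / (n! d_1 ... d_n) points: slicing along the first coordinate,
   s^(n+1) telescopes as sum_t (a_t^(n+1) - a_(t+1)^(n+1)) with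
   a_t = max(s - t d_1, 0), and each term is at most (n+1) d_1 a_t^n, which the
   induction hypothesis bounds by the slice at height t. *)

From mathcomp Require Import all_boot all_order all_algebra.
From mathcomp Require Import ring lra zify.
Set Implicit Arguments. Unset Strict Implicit. Unset Printing Implicit Defensive.
Import Order.TTheory GRing.Theory Num.Theory.
Local Open Scope ring_scope.

Lemma card_pairs (T1 T2 : finType) (P : pred T1) (Q : T1 -> pred T2) :
  #|[set p : T1 * T2 | P p.1 && Q p.1 p.2]| = (\sum_(x | P x) #|[set y | Q x y]|)%N.
Proof.
rewrite -sum1dep_card -(pair_big_dep _ _ (fun _ _ => 1%N)) /=.
by apply: eq_bigr => x _; rewrite sum1dep_card.
Qed.

Definition ffun_cons (T : Type) n (t : T) (g : {ffun 'I_n -> T}) : {ffun 'I_n.+1 -> T} :=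
  [ffun i => if unlift ord0 i is Some j then g j else t].

Lemma ffun_cons_bij (T : Type) n :
  bijective (fun p : T * {ffun 'I_n -> T} => ffun_cons p.1 p.2).
Proof.
exists (fun f : {ffun 'I_n.+1 -> T} => (f ord0, [ffun i => f (lift ord0 i)])).
  move=> [t g] /=; congr pair; first by rewrite ffunE unlift_none.
  by apply/ffunP=> i; rewrite !ffunE liftK.
move=> f; apply/ffunP=> i; rewrite !ffunE.
by case: unliftP => [j ->|->]; rewrite ?ffunE.
Qed.

Lemma card_ffunS (T : finType) n (P : pred {ffun 'I_n.+1 -> T}) :
  #|[set f | P f]| = (\sum_t #|[set g | P (ffun_cons t g)]|)%N.
Proof.
have [h consK hK] := ffun_cons_bij T n.
rewrite -(card_pairs predT) -(card_imset _ (can_inj consK)).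
apply: eq_card => f; rewrite inE; apply/idP/imsetP => [Pf | [p + ->]].
  by exists (h f); rewrite ?inE hK.
by rewrite inE.
Qed.

Lemma ler_subrXX (R : realDomainType) (a b : R) n : 0 <= b -> b <= a ->
  a ^+ n.+1 - b ^+ n.+1 <= n.+1%:R * a ^+ n * (a - b).
Proof.
move=> b_ge0 le_ba; have a_ge0 := le_trans b_ge0 le_ba.
rewrite subrXX mulrC ler_wpM2r ?subr_ge0 //.
rewrite -[in leRHS](card_ord n.+1) mulr_natl -sumr_const; apply: ler_sum => i _ /=.
rewrite -[in leRHS](subnK (leq_ord i)) exprD.
by rewrite ler_wpM2l ?exprn_ge0 // lerXn2r // nnegrE.
Qed.

Definition simplex_count (R : realFieldType) n M (d : 'I_n -> R) (s : R) : nat :=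
  #|[set m : {ffun 'I_n -> 'I_M.+1} | \sum_(i < n) (m i : nat)%:R * d i <= s]|.

Lemma simplex_count0 (R : realFieldType) M (d : 'I_0 -> R) s :
  0 <= s -> simplex_count M d s = 1%N.
Proof.
move=> s_ge0; transitivity #|{ffun 'I_0 -> 'I_M.+1}|.
  by apply: eq_card => m; rewrite !inE big_ord0 s_ge0.
by rewrite card_ffun !card_ord.
Qed.

Lemma simplex_countS (R : realFieldType) n M (d : 'I_n.+1 -> R) s :
  simplex_count M d s =
  (\sum_(t < M.+1) simplex_count M (fun i => d (lift ord0 i)) (s - t%:R * d ord0))%N.
Proof.
rewrite /simplex_count card_ffunS; apply: eq_bigr => t _; apply: eq_card => g.
rewrite !inE big_ord_recl /ffun_cons ffunE unlift_none.
under eq_bigr do rewrite ffunE liftK.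
by rewrite addrC -lerBrDr.
Qed.

Lemma ler_sub_pos_partXn (R : realDomainType) (x h : R) k : 0 <= h -> 0 <= x ->
  x ^+ k.+1 - Num.max (x - h) 0 ^+ k.+1 <= k.+1%:R * h * x ^+ k.
Proof.
move=> h_ge0 x_ge0.
have y_ge0 : 0 <= Num.max (x - h) 0 by rewrite le_max lexx orbT.
have le_yx : Num.max (x - h) 0 <= x by rewrite ge_max x_ge0 andbT gerBl.
apply: le_trans (ler_subrXX _ y_ge0 le_yx) _.
rewrite [leRHS]mulrAC ler_wpM2l ?mulr_ge0 ?exprn_ge0 ?ler0n //.
by rewrite lerBlDr -lerBlDl le_max lexx.
Qed.

Lemma telescope_pos_partXn (R : realDomainType) (s h : R) M k :
  0 <= s -> s <= M.+1%:R * h ->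
  \sum_(t < M.+1) (Num.max (s - t%:R * h) 0 ^+ k.+1 - Num.max (s - t.+1%:R * h) 0 ^+ k.+1)
  = s ^+ k.+1.
Proof.
move=> s_ge0 s_le; pose a t := Num.max (s - t%:R * h) 0.
rewrite -(big_mkord xpredT (fun t => a t ^+ k.+1 - a t.+1 ^+ k.+1)).
rewrite (@telescope_sumr_eq _ 0 M.+1 (fun t => - a t ^+ k.+1)) => [||t _] //.
  by rewrite /a mul0r subr0 (max_l s_ge0) max_r ?subr_le0 // expr0n oppr0 sub0r opprK.
by rewrite opprK addrC.
Qed.

Lemma simplex_count_lb (R : realFieldType) n M (d : 'I_n -> R) s :
  (forall i, 0 < d i) -> 0 <= s -> (forall i, s < M.+1%:R * d i) ->
  s ^+ n <= (n`!)%:R * \prod_(i < n) d i * (simplex_count M d s)%:R.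
Proof.
elim: n d s => [|n IHn] d s d_gt0 s_ge0 s_lt.
  by rewrite simplex_count0 // big_ord0 fact0 !mulr1.
set d0 := d ord0; set d' := fun i => d (lift ord0 i).
have d0_gt0 : 0 < d0 := d_gt0 ord0.
pose c t := simplex_count M d' (s - t%:R * d0).
have -> : (n.+1)`!%:R * \prod_(i < n.+1) d i * (simplex_count M d s)%:R =
    \sum_(t < M.+1) n.+1%:R * d0 * ((n`!)%:R * \prod_(i < n) d' i * (c t)%:R).
  rewrite simplex_countS natr_sum !mulr_sumr; apply: eq_bigr => t _.
  by rewrite factS natrM big_ord_recl /c /d0 /d'; ring.
rewrite -(telescope_pos_partXn n s_ge0 (ltW (s_lt ord0))) -/d0.
apply: ler_sum => t _; rewrite -natr1 mulrDl mul1r opprD addrA.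
have [le_ts | lt_st] := leP (t%:R * d0) s; last first.
  rewrite !max_r ?expr0n ?subrr; try lra.
  have prod_ge0 : 0 <= \prod_(i < n) d' i by apply: prodr_ge0 => i _; exact/ltW/d_gt0.
  by rewrite !mulr_ge0 ?ler0n ?prod_ge0 ?(ltW d0_gt0).
rewrite (@max_l _ _ (s - t%:R * d0)) ?subr_ge0 //.
apply: le_trans (ler_sub_pos_partXn _ (ltW d0_gt0) _) _; first by rewrite subr_ge0.
rewrite ler_wpM2l ?mulr_ge0 ?ler0n ?(ltW d0_gt0) //.
apply: IHn => [i||i]; first exact: d_gt0.
  by rewrite subr_ge0.
by apply: le_lt_trans (s_lt (lift ord0 i)); rewrite gerBl mulr_ge0 // ltW.
Qed.

Definition signed_pt n (S : {set 'I_n}) (m : 'I_n -> nat) : 'I_n -> int :=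
  fun i => if i \in S then - (m i).+1%:Z else (m i)%:Z.

Lemma signed_pt_inj n (S S' : {set 'I_n}) (m m' : 'I_n -> nat) :
  signed_pt S m =1 signed_pt S' m' -> S = S' /\ m =1 m'.
Proof.
rewrite /signed_pt => E; have ES : S = S'.
  by apply/setP=> i; have := E i; case: (i \in S); case: (i \in S') => //; lia.
by split=> // i; have := E i; rewrite -ES; case: (i \in S); lia.
Qed.

Lemma norm_lattice_pt_signed (R : realFieldType) n (d : 'I_n -> R) S m i :
  0 < d i ->
  `|lattice_pt d (signed_pt S m) i| = (m i)%:R * d i + (if i \in S then d i else 0).
Proof.
move=> d_gt0; rewrite /lattice_pt /signed_pt normrM (gtr0_norm d_gt0).
case: (i \in S); last by rewrite addr0 normr_nat.
by rewrite mulrNz normrN normr_nat -natr1 mulrDl mul1r.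
Qed.

Lemma l1_lattice_pt_signed (R : realFieldType) n (d : 'I_n -> R) S m :
  (forall i, 0 < d i) ->
  \sum_(i < n) `|lattice_pt d (signed_pt S m) i| = \sum_(i < n) (m i)%:R * d i + dS d S.
Proof.
move=> d_gt0; under eq_bigr do rewrite norm_lattice_pt_signed //.
by rewrite big_split /= -big_mkcond.
Qed.

Lemma trunc_le_box_bound (R : archiRealFieldType) n r (d : 'I_n -> R) i :
  (Num.trunc (r / d i) <= box_bound r d)%N.
Proof. by rewrite /box_bound (bigD1 i) //= leq_addr. Qed.

Lemma lt_box_bound (R : archiRealFieldType) n r (d : 'I_n -> R) i :
  0 < d i -> r < (box_bound r d).+1%:R * d i.
Proof.
move=> d_gt0; rewrite -ltr_pdivrMr //; apply: lt_le_trans (truncnS_gt _) _.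
by rewrite ler_nat ltnS trunc_le_box_bound.
Qed.

Lemma in_U_box_bound (R : archiRealFieldType) n r (d : 'I_n -> R) (k : 'I_n -> int) i :
  (forall i, 0 < d i) -> in_U r (lattice_pt d k) -> (`|k i| <= box_bound r d)%N.
Proof.
move=> d_gt0 k_in_U; apply: leq_trans (trunc_le_box_bound r d i).
have le_ki : `|k i|%N%:R * d i <= r.
  apply: le_trans k_in_U; rewrite (bigD1 i) //= -lerBlDl.
  rewrite /lattice_pt normrM (gtr0_norm (d_gt0 i)) -intr_norm subrr.
  by apply: sumr_ge0 => j _; exact: normr_ge0.
have r_ge0 : 0 <= r by apply: le_trans le_ki; rewrite mulr_ge0 // ltW.
by rewrite truncn_ge_nat ?ler_pdivlMr ?mul0r.
Qed.

Definition box_code n N (k : 'I_n -> int) : {ffun 'I_n -> 'I_(N + N).+1} :=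
  [ffun i => inord (absz (N%:Z + k i)%R)].

Lemma box_codeK n N (k : 'I_n -> int) :
  (forall i, `|k i| <= N)%N -> box_vec (box_code N k) =1 k.
Proof. by move=> kN i; rewrite /box_vec ffunE inordK; have := kN i; lia. Qed.

Lemma simplex_counts_le_lattice_count (R : archiRealFieldType) n (r : R) (d : 'I_n -> R) :
  (forall i, 0 < d i) ->
  (\sum_(S : {set 'I_n} | (dS d S <= r)%R)
      simplex_count (box_bound r d) d (r - dS d S) <= lattice_count r d)%N.
Proof.
move=> d_gt0; set N := box_bound r d.
pose D := [set p : {set 'I_n} * {ffun 'I_n -> 'I_N.+1} |
  (dS d p.1 <= r) && (\sum_(i < n) (p.2 i : nat)%:R * d i <= r - dS d p.1)].
pose emb (p : {set 'I_n} * {ffun 'I_n -> 'I_N.+1}) := signed_pt p.1 (fun i => p.2 i : nat).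
have emb_in_U p : p \in D -> in_U r (lattice_pt d (emb p)).
  by rewrite inE /in_U l1_lattice_pt_signed // lerBrDr => /andP[].
have emb_bound p : p \in D -> forall i, (`|emb p i| <= N)%N.
  by move/emb_in_U => emb_p_in_U i; exact: in_U_box_bound.
have code_inj : {in D &, injective (fun p => box_code N (emb p))}.
  move=> [S m] [S' m'] pD qD /= E.
  have Eemb : emb (S, m) =1 emb (S', m').
    move=> i; rewrite -(box_codeK (emb_bound _ pD)) -(box_codeK (emb_bound _ qD)).
    by rewrite E.
  have [/= -> Em] := signed_pt_inj Eemb.
  by congr pair; apply/ffunP => i; apply: val_inj; exact: Em.
rewrite -(card_pairs (fun S => dS d S <= r)) -/D -(card_in_imset code_inj).
apply: subset_leq_card; apply/subsetP => _ /imsetP[p pD ->].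
rewrite inE /in_U; under eq_bigr do rewrite /lattice_pt (box_codeK (emb_bound p pD)).
exact: emb_in_U.
Qed.

Theorem lemma2p5p3 (R : archiRealFieldType) (n : nat) (r : R) (d : 'I_n -> R)
  (hr : 0 < r) (hd : forall i, 0 < d i) :
  (lattice_count r d)%:R >=
    ((n`!)%:R * \prod_(i < n) d i)^-1 *
      \sum_(S : {set 'I_n} | dS d S <= r) (r - dS d S) ^+ n.
Proof.
have vol_gt0 : 0 < (n`!)%:R * \prod_(i < n) d i.
  by rewrite mulr_gt0 ?ltr0n ?fact_gt0 // prodr_gt0.
have := simplex_counts_le_lattice_count r hd; rewrite -(ler_nat R) natr_sum; apply: le_trans.
rewrite mulr_sumr; apply: ler_sum => S le_dS_r.
rewrite mulrC ler_pdivrMr // mulrC; apply: simplex_count_lb => [||i] //.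
  by rewrite subr_ge0.
apply: le_lt_trans (lt_box_bound r (hd i)).
by rewrite gerBl; apply: sumr_ge0 => j _; exact: ltW.
Qed.
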